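(* In the setting described in the context, suppose that the linear operators $Y$ and $Y'$ act on the subspace $I_2\subset V^{\otimes 2}$ as $(q+1)$ times the identity operator. Then $\ell_{xy}(x)=\ell_{xx}(y)$ and $\ell'_{xy}(x)=\ell'_{xx}(y)$ for all $x,y\in V$.
   Context: Let $V$ be a $3$-dimensional vector space over a field $k$ and $\zeta\in GL(V)$. Write $xy$ for $x\otimes y$ in $T(V)$. Put $x\barwedge y=\zeta(x)y-\zeta(y)x$ and $x\barwedge y\barwedge z=\zeta^2(x)\zeta(y)z+\zeta^2(y)\zeta(z)x+\zeta^2(z)\zeta(x)y-\zeta^2(x)\zeta(z)y-\zeta^2(y)\zeta(x)z-\zeta^2(z)\zeta(y)x$. Let $I$ be the ideal of $T(V)$ generated by all $x\barwedge y$, $A=T(V)/I$, $I_2=I\cap V^{\otimes2}$, $\Upsilon^{(3)}=(I_2\otimes V)\cap(V\otimes I_2)=\mathrm{span}\{x\barwedge y\barwedge z\}$. Via the isomorphisms $\bigwedge^2V\cong I_2$, $x\wedge y\mapsto x\barwedge y$ and $\bigwedge^3V\cong \Upsilon^{(3)}$, $x\wedge y\wedge z\mapsto x\barwedge y\barwedge z$, one has a bilinear product $x\barwedge w\in\Upsilon^{(3)}$ for $x\in V,w\in I_2$ with $x\barwedge(y\barwedge z)=x\barwedge y\barwedge z$. Let $R$ be a Hecke symmetry on $V$ with parameter $q\ne 0$ (braid equation and $(R-q\,\mathrm{Id})(R+\mathrm{Id})=0$) with $\mathrm{Im}(R-q\,\mathrm{Id})=I_2$ (i.e. $\mathbb{S}(V,R)=A$).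 Put $R'=(\zeta^{-1}\otimes\zeta^{-1})R(\zeta\otimes\zeta)$, $Y=q\,\mathrm{Id}-R$, $Y'=q\,\mathrm{Id}-R'$. Fix a nonzero alternating trilinear form $\omega$ on $V$, let $\tilde\omega:\Upsilon^{(3)}\to k$ be linear with $\tilde\omega(x\barwedge y\barwedge z)=\omega(x,y,z)$, and define $\ell_{xy},\ell'_{xy}\in V^*$ by $\ell_{xy}(z)=\tilde\omega(x\barwedge Y(\zeta(y)z))$, $\ell'_{xy}(z)=\tilde\omega(x\barwedge Y'(\zeta(y)z))$. *)

(* Coordinates: V = k^3 realised as row vectors 'rV[K]_3,
   V (x) V realised as 'rV[K]_(3*3), V (x) V (x) V as 'rV[K]_(3*3*3), the
   coordinate of e_i (x) e_j being at index mxvec_index i j and that of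
   e_i (x) e_j (x) e_k at mxvec_index (mxvec_index i j) k.  Linear operators
   on V (resp. V (x) V) are matrices acting on the right of row vectors. *)
From HB Require Import structures.
From mathcomp Require Import all_boot all_order all_algebra.
Set Implicit Arguments. Unset Strict Implicit. Unset Printing Implicit Defensive.
Import Order.TTheory GRing.Theory Num.Theory.
Local Open Scope ring_scope.

Section Tensors.
Variable K : fieldType.

Notation V := 'rV[K]_3.
Notation T2 := 'rV[K]_(3 * 3).
Notation T3 := 'rV[K]_(3 * 3 * 3).

Definition c2 (w : T2) (i j : 'I_3) : K := w 0 (mxvec_index i j).
Definition c3 (u : T3) (i j k : 'I_3) : K :=
  u 0 (mxvec_index (mxvec_index i j) k).

Definition mk2 (f : 'I_3 -> 'I_3 -> K) : T2 := mxvec (\matrix_(i, j) f i j).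
Definition mk3 (f : 'I_3 -> 'I_3 -> 'I_3 -> K) : T3 :=
  mxvec (\matrix_(a, k) (mxvec (\matrix_(i, j) f i j k)) 0 a).

Definition tens2 (x y : V) : T2 := mk2 (fun i j => x 0 i * y 0 j).
Definition tens3 (x y z : V) : T3 :=
  mk3 (fun i j k => x 0 i * y 0 j * z 0 k).

(* R (x) Id and Id (x) R on V^{(x)3}, for R acting on V (x) V by w |-> w *m R *)
Definition op12 (R : 'M[K]_(3 * 3)) (u : T3) : T3 :=
  mk3 (fun k l m => \sum_(i < 3) \sum_(j < 3)
         c3 u i j m * R (mxvec_index i j) (mxvec_index k l)).
Definition op23 (R : 'M[K]_(3 * 3)) (u : T3) : T3 :=
  mk3 (fun i k l => \sum_(j < 3) \sum_(m < 3)
         c3 u i j m * R (mxvec_index j m) (mxvec_index k l)).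

Definition tensop (A B : 'M[K]_3) (w : T2) : T2 :=
  mk2 (fun k l => \sum_(i < 3) \sum_(j < 3) c2 w i j * A i k * B j l).

Definition hecke_symmetry (R : 'M[K]_(3 * 3)) (q : K) : Prop :=
  [/\ q != 0,
      (forall u : T3, op12 R (op23 R (op12 R u)) = op23 R (op12 R (op23 R u)))
    & (R - q%:M) *m (R + 1%:M) = 0].

(* zeta is given by the invertible matrix Z : zeta(x) = x *m Z *)
Definition bwedge2 (Z : 'M[K]_3) (x y : V) : T2 :=
  tens2 (x *m Z) y - tens2 (y *m Z) x.

Definition bwedge3 (Z : 'M[K]_3) (x y z : V) : T3 :=
  let Z2 := Z *m Z in
    tens3 (x *m Z2) (y *m Z) z + tens3 (y *m Z2) (z *m Z) x
  + tens3 (z *m Z2) (x *m Z) y - tens3 (x *m Z2) (z *m Z) y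
  - tens3 (y *m Z2) (x *m Z) z - tens3 (z *m Z2) (y *m Z) x.

(* I_2 = I \cap V^{(x)2} = linear span of all x barwedge y *)
Definition in_I2 (Z : 'M[K]_3) (w : T2) : Prop :=
  exists s : seq (K * V * V),
    w = \sum_(p <- s) p.1.1 *: bwedge2 Z p.1.2 p.2.

Definition im_is_I2 (Z : 'M[K]_3) (R : 'M[K]_(3 * 3)) (q : K) : Prop :=
  forall w : T2, (exists u : T2, w = u *m (R - q%:M)) <-> in_I2 Z w.

Definition Yop (R : 'M[K]_(3 * 3)) (q : K) (w : T2) : T2 := q *: w - w *m R.
Definition Rprime (Z : 'M[K]_3) (R : 'M[K]_(3 * 3)) (w : T2) : T2 :=
  tensop (invmx Z) (invmx Z) (tensop Z Z w *m R).
Definition Yprime (Z : 'M[K]_3) (R : 'M[K]_(3 * 3)) (q : K) (w : T2) : T2 :=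
  q *: w - Rprime Z R w.

Definition trilinear (om : V -> V -> V -> K) : Prop :=
  [/\ forall (a : K) x x' y z, om (a *: x + x') y z = a * om x y z + om x' y z,
      forall (a : K) x y y' z, om x (a *: y + y') z = a * om x y z + om x y' z
    & forall (a : K) x y z z', om x y (a *: z + z') = a * om x y z + om x y z'].

Definition alternating3 (om : V -> V -> V -> K) : Prop :=
  [/\ forall x z, om x x z = 0, forall x y, om x y y = 0
    & forall x y, om x y x = 0].

Definition alt_trilinear (om : V -> V -> V -> K) : Prop :=
  trilinear om /\ alternating3 om.

Definition nonzero_form (om : V -> V -> V -> K) : Prop :=
  exists x y z, om x y z != 0.

(* a linear functional on V^{(x)3} (only its restriction to Upsilon^(3) matters) *)
Definition linear_functional (f : T3 -> K) : Prop :=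
  forall (a : K) u v, f (a *: u + v) = a * f u + f v.

(* a bilinear product V x V^{(x)2} -> V^{(x)3} (only its restriction to
   V x I_2 -> Upsilon^(3) matters) *)
Definition bilinear_prod (p : V -> T2 -> T3) : Prop :=
  (forall (a : K) x x' w, p (a *: x + x') w = a *: p x w + p x' w) /\
  (forall (a : K) x w w', p x (a *: w + w') = a *: p x w + p x w').

(* l_{xy}(z) = omega~(x barwedge Y(zeta(y) z)), for an operator Y *)
Definition ell (Z : 'M[K]_3) (Yo : T2 -> T2) (wt : T3 -> K)
  (wp : V -> T2 -> T3) (x y z : V) : K :=
  wt (wp x (Yo (tens2 (y *m Z) z))).

End Tensors.

(* Since [Y] is additive,
   [Y(zeta(y) x) - Y(zeta(x) y) = Y(y barwedge x) = (q+1) y barwedge x].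
   Applying [x barwedge -] and then [omega~] turns this difference into
   [(q+1) omega(x, y, x)], which vanishes because [omega] is alternating. *)
From HB Require Import structures.
From mathcomp Require Import all_boot all_order all_algebra.
Set Implicit Arguments.
Unset Strict Implicit.
Unset Printing Implicit Defensive.
Import GRing.Theory.
Local Open Scope ring_scope.

Lemma bwedge2_in_I2 (K : fieldType) (Z : 'M[K]_3) x y : in_I2 Z (bwedge2 Z x y).
Proof. by exists [:: (1, x, y)]; rewrite big_seq1 scale1r. Qed.

Section Additivity.
Variable K : fieldType.

Lemma tensopB (A B : 'M[K]_3) u v :
  tensop A B (u - v) = tensop A B u - tensop A B v.
Proof.
rewrite /tensop /mk2 -linearB /=; congr mxvec; apply/matrixP => k l.
rewrite !mxE -sumrB; apply: eq_bigr => i _; rewrite -sumrB; apply: eq_bigr => j _.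
by rewrite /c2 !mxE !mulrBl.
Qed.

Lemma YopB (R : 'M[K]_(3 * 3)) q u v : Yop R q (u - v) = Yop R q u - Yop R q v.
Proof. by rewrite /Yop scalerBr mulmxBl !opprD addrACA. Qed.

Lemma YprimeB (Z : 'M[K]_3) R q u v :
  Yprime Z R q (u - v) = Yprime Z R q u - Yprime Z R q v.
Proof.
by rewrite /Yprime /Rprime scalerBr tensopB mulmxBl tensopB !opprD addrACA.
Qed.

End Additivity.

Section EllSwap.
Variables (K : fieldType) (Z : 'M[K]_3).
Variables (Yo : 'rV[K]_(3 * 3) -> 'rV[K]_(3 * 3)) (c : K).
Hypotheses (YoB : forall u v, Yo (u - v) = Yo u - Yo v)
  (Yo_I2 : forall w, in_I2 Z w -> Yo w = c *: w).

Lemma Yo_tens2_swap x y :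
  Yo (tens2 (y *m Z) x) = c *: bwedge2 Z y x + Yo (tens2 (x *m Z) y).
Proof. by rewrite -(Yo_I2 (bwedge2_in_I2 Z y x)) /bwedge2 YoB subrK. Qed.

Variables (om : 'rV[K]_3 -> 'rV[K]_3 -> 'rV[K]_3 -> K)
  (wt : 'rV[K]_(3 * 3 * 3) -> K)
  (wp : 'rV[K]_3 -> 'rV[K]_(3 * 3) -> 'rV[K]_(3 * 3 * 3)).
Hypotheses (om_alt : alternating3 om) (wt_lin : linear_functional wt)
  (wt_bwedge3 : forall x y z, wt (bwedge3 Z x y z) = om x y z)
  (wp_bilin : bilinear_prod wp)
  (wp_bwedge2 : forall x y z, wp x (bwedge2 Z y z) = bwedge3 Z x y z).

Lemma ell_swap x y : ell Z Yo wt wp x y x = ell Z Yo wt wp x x y.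
Proof.
case: wp_bilin => _ wpD; case: om_alt => _ _ om_xyx.
by rewrite /ell Yo_tens2_swap wpD wt_lin wp_bwedge2 wt_bwedge3 om_xyx mulr0 add0r.
Qed.

End EllSwap.

Theorem lemma2p2 (K : fieldType) (Z : 'M[K]_3) (R : 'M[K]_(3 * 3)) (q : K)
  (om : 'rV[K]_3 -> 'rV[K]_3 -> 'rV[K]_3 -> K)
  (wt : 'rV[K]_(3 * 3 * 3) -> K)
  (wp : 'rV[K]_3 -> 'rV[K]_(3 * 3) -> 'rV[K]_(3 * 3 * 3)) :
  Z \in unitmx ->
  hecke_symmetry R q ->
  im_is_I2 Z R q ->
  alt_trilinear om -> nonzero_form om ->
  linear_functional wt ->
  (forall x y z, wt (bwedge3 Z x y z) = om x y z) ->
  bilinear_prod wp ->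
  (forall x y z, wp x (bwedge2 Z y z) = bwedge3 Z x y z) ->
  (forall w, in_I2 Z w -> Yop R q w = (q + 1) *: w) ->
  (forall w, in_I2 Z w -> Yprime Z R q w = (q + 1) *: w) ->
  forall x y : 'rV[K]_3,
    ell Z (Yop R q) wt wp x y x = ell Z (Yop R q) wt wp x x y /\
    ell Z (Yprime Z R q) wt wp x y x = ell Z (Yprime Z R q) wt wp x x y.
Proof.
move=> _ _ _ [_ om_alt] _ wt_lin wt_bwedge3 wp_bilin wp_bwedge2 Y_I2 Y'_I2 x y.
split.
- exact: (ell_swap (@YopB K R q) Y_I2 om_alt wt_lin wt_bwedge3 wp_bilin
                   wp_bwedge2 x y).
- exact: (ell_swap (@YprimeB K Z R q) Y'_I2 om_alt wt_lin wt_bwedge3 wp_bilin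
                   wp_bwedge2 x y).
Qed.
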